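(* Let $u\colon\mathcal{A}\times\mathbb{R}\to\mathbb{R}$ be a utility function which is strictly decreasing in the payment $z$ for each fixed alternative. Then: (1) The preference represented by $u$ is represented by some quasi-linear utility function if and only if there exist a function $v\colon\mathcal{A}\to\mathbb{R}$ and a strictly increasing function $\varphi\colon\mathbb{R}\to\mathbb{R}$ such that $u(a,z)=\varphi(v(a)-z)$ for all $a\in\mathcal{A}$, $z\in\mathbb{R}$. (2) The preference represented by $u$ is pos-represented by some quasi-linear utility function if and only if there exist a function $v\colon\mathcal{A}\to\mathbb{R}$ and a strictly increasing function $\varphi\colon\mathbb{R}\to\mathbb{R}$ such that $u(a,z)=\varphi(v(a)-z)$ for all $a\in\mathcal{A}$ and all $z\leqslant v(a)$.
   Context: $\mathcal{A}$ is a finite set of alternatives. A preference is a complete, transitive binary relation $\succcurlyeq$ on $\mathcal{A}\times\mathbb{R}$, where $(a,z)$ means alternative $a$ is chosen and the agent pays $z$. A function $u$ represents $\succcurlyeq$ if for all $a,b\in\mathcal{A}$, $z_a,z_b\in\mathbb{R}$: $(a,z_a)\succcurlyeq(b,z_b)\iff u(a,z_a)\geqslant u(b,z_b)$. A function $u$ pos-represents $\succcurlyeq$ if this equivalence holds for all $a,b,z_a,z_b$ with $u(a,z_a)\geqslant0$ or $u(b,z_b)\geqslant0$. A utility function is quasi-linear if $u(a,z)=v(a)-z$ for some $v\colon\mathcal{A}\to\mathbb{R}$. *)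

From mathcomp Require Import ssreflect ssrfun ssrbool eqtype fintype.
From Stdlib Require Import Reals.
Open Scope R_scope.

(* A preference is a (complete, transitive) binary relation on A x R;
   (a, z): alternative a chosen, agent pays z. *)
Definition preference (A : Type) := (A * R) -> (A * R) -> Prop.

Definition pref_of {A : Type} (u : A -> R -> R) : preference A :=
  fun x y => u (fst x) (snd x) >= u (fst y) (snd y).

Definition represents {A : Type} (w : A -> R -> R) (p : preference A) : Prop :=
  forall (a b : A) (za zb : R), p (a, za) (b, zb) <-> w a za >= w b zb.

Definition pos_represents {A : Type} (w : A -> R -> R) (p : preference A) : Prop :=
  forall (a b : A) (za zb : R), (w a za >= 0 \/ w b zb >= 0) ->
    (p (a, za) (b, zb) <-> w a za >= w b zb).

Definition quasi_linear {A : Type} (w : A -> R -> R) : Prop :=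
  exists v : A -> R, forall a z, w a z = v a - z.

Definition strictly_increasing (f : R -> R) : Prop :=
  forall x y, x < y -> f x < f y.

Definition strictly_decreasing_in_payment {A : Type} (u : A -> R -> R) : Prop :=
  forall a z1 z2, z1 < z2 -> u a z2 < u a z1.

(* Under a quasi-linear representation v(a) - z, two pairs with the same
   value v(a) - z are indifferent, so fixing any alternative a0 gives
   u a z = u a0 (v a0 - (v a - z)): u factors through v(a) - z via
   phi t = u a0 (v a0 - t), which is strictly increasing because u is
   strictly decreasing in the payment.  Under a pos-representation this only
   works where v(a) - z >= 0, and phi is extended linearly below 0.
   Conversely a strictly increasing phi reflects the order, and the pairs with
   v(a) - z < 0 are ranked below phi 0 by monotonicity in the payment. *)

From mathcomp Require Import ssreflect ssrfun ssrbool eqtype fintype.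
From Stdlib Require Import Reals Lra.
Open Scope R_scope.

Set Implicit Arguments.

Lemma strictly_increasing_ge (phi : R -> R) (x y : R) :
  strictly_increasing phi -> (phi x >= phi y <-> x >= y).
Proof.
move=> phi_inc; split=> [|xy].
- by move=> phixy; apply: Rnot_lt_ge => /phi_inc; lra.
- by case: (Rge_gt_or_eq_dec _ _ xy) => [/phi_inc|->]; lra.
Qed.

Definition extend_from_nonneg (f : R -> R) (t : R) : R :=
  if Rle_dec 0 t then f t else f 0 + t.

Lemma extend_from_nonneg_id (f : R -> R) (t : R) :
  0 <= t -> extend_from_nonneg f t = f t.
Proof. by rewrite /extend_from_nonneg; case: Rle_dec. Qed.

Lemma extend_from_nonneg_increasing (f : R -> R) :
  (forall s t, 0 <= s -> s < t -> f s < f t) ->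
  strictly_increasing (extend_from_nonneg f).
Proof.
move=> f_inc x y xy; rewrite /extend_from_nonneg.
case: Rle_dec => x0 /=; case: Rle_dec => y0 /=; try lra.
- exact: f_inc.
- case: (Rle_lt_or_eq_dec 0 y y0) => [/(f_inc 0 y (Rle_refl 0))|y_eq]; first lra.
  by rewrite -y_eq; lra.
Qed.

Lemma factorisation_of_inhabited (A : finType) (Q : (R -> R) -> A -> Prop) :
  (A -> exists phi, strictly_increasing phi /\ forall a, Q phi a) ->
  exists phi, strictly_increasing phi /\ forall a, Q phi a.
Proof.
case: (pickP (fun _ : A => true)) => [a0 _ /(_ a0)|A_empty _] //.
by exists id; split=> [//|a]; have := A_empty a.
Qed.

Section DecreasingInPayment.

Variables (A : Type) (u : A -> R -> R).
Hypothesis hu : strictly_decreasing_in_payment u.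

Lemma payment_reversal_increasing (a0 : A) (c : R) :
  strictly_increasing (fun t => u a0 (c - t)).
Proof. by move=> x y xy; apply: hu; lra. Qed.

Lemma represents_ql_factor (w : A -> R -> R) (v : A -> R) (a0 : A) :
  (forall a z, w a z = v a - z) -> represents w (pref_of u) ->
  forall a z, u a z = u a0 (v a0 - (v a - z)).
Proof.
move=> wE w_rep a z.
by apply: Rge_antisym; apply/w_rep; rewrite !wE; lra.
Qed.

Lemma pos_represents_ql_factor (w : A -> R -> R) (v : A -> R) (a0 : A) :
  (forall a z, w a z = v a - z) -> pos_represents w (pref_of u) ->
  forall a z, z <= v a -> u a z = u a0 (v a0 - (v a - z)).
Proof.
move=> wE w_rep a z zv.
by apply: Rge_antisym; apply/w_rep; rewrite !wE; lra.
Qed.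

Lemma factor_represents (v : A -> R) (phi : R -> R) :
  strictly_increasing phi -> (forall a z, u a z = phi (v a - z)) ->
  represents (fun a z => v a - z) (pref_of u).
Proof.
by move=> phi_inc uE a b za zb; rewrite /pref_of /= !uE strictly_increasing_ge.
Qed.

Lemma factor_pos_represents (v : A -> R) (phi : R -> R) :
  strictly_increasing phi -> (forall a z, z <= v a -> u a z = phi (v a - z)) ->
  pos_represents (fun a z => v a - z) (pref_of u).
Proof.
move=> phi_inc uE.
have below0 a z : v a < z -> u a z < phi 0.
  by move=> vz; rewrite -(Rminus_diag (v a)) -uE; [apply: hu | apply: Rle_refl].
have above0 t : 0 <= t -> phi 0 <= phi t.
  by move=> t0; apply/Rge_le/(strictly_increasing_ge _ _ phi_inc); lra.
move=> a b za zb; rewrite /pref_of /=.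
case: (Rle_dec za (v a)) => za_v; case: (Rle_dec zb (v b)) => zb_v.
- by rewrite !uE // strictly_increasing_ge.
- have := below0 b zb; have := above0 (v a - za); rewrite -uE //; lra.
- have := below0 a za; have := above0 (v b - zb); rewrite -uE //; lra.
- lra.
Qed.

End DecreasingInPayment.

Theorem theorem4 (A : finType) (u : A -> R -> R)
  (hu : strictly_decreasing_in_payment u) :
  ((exists w : A -> R -> R, quasi_linear w /\ represents w (pref_of u)) <->
     (exists (v : A -> R) (phi : R -> R), strictly_increasing phi /\
        forall (a : A) (z : R), u a z = phi (v a - z)))
  /\
  ((exists w : A -> R -> R, quasi_linear w /\ pos_represents w (pref_of u)) <->
     (exists (v : A -> R) (phi : R -> R), strictly_increasing phi /\
        forall (a : A) (z : R), z <= v a -> u a z = phi (v a - z))).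
Proof.
split; split.
- move=> [w [[v wE] w_rep]]; exists v.
  apply: factorisation_of_inhabited => a0.
  exists (fun t => u a0 (v a0 - t)); split; first exact: payment_reversal_increasing.
  exact: represents_ql_factor wE w_rep.
- move=> [v [phi [phi_inc uE]]]; exists (fun a z => v a - z); split; first by exists v.
  exact: factor_represents phi_inc uE.
- move=> [w [[v wE] w_rep]]; exists v.
  apply: factorisation_of_inhabited => a0.
  exists (extend_from_nonneg (fun t => u a0 (v a0 - t))); split.
  + by apply: extend_from_nonneg_increasing => s t _; apply: payment_reversal_increasing.
  + move=> a z zv; rewrite extend_from_nonneg_id; last lra.
    exact: pos_represents_ql_factor wE w_rep a z zv.
- move=> [v [phi [phi_inc uE]]]; exists (fun a z => v a - z); split; first by exists v.
  exact: (factor_pos_represents hu v phi_inc uE).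
Qed.
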